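(* In the setting described in the context, if $s>m^{2^r}$, then $\mathrm{IN}_s(X)\setminus\triangle^{(s)}(X)=\emptyset$.
   Context: Let $r\geq 2$, $G=\mathbb Z^r$ with standard basis $e_1,\dots,e_r$. For each $j$, let $(p_j^i)_{i}$ be strictly increasing positive integers with $p_j^i\mid p_j^{i+1}$, $p_j^i>2i+1$, and $\Gamma_i=\langle p_j^ie_j:1\le j\le r\rangle$, with $[\Gamma_i:\Gamma_{i+1}]>1/(1-2^{-(1/2)^{i+1}})$. Let $D_i\subseteq\mathbb Z^r$ be fundamental domains of $\mathbb Z^r/\Gamma_i$ of the form $\{x: -q^i_{1,j}\le x_j<q^i_{2,j}\}$ with $q^i_{1,j},q^i_{2,j}>i$, $q^i_{1,j}+q^i_{2,j}=p^i_j$, $0\in D_i\subseteq D_{i+1}$, $\bigcup_iD_i=\mathbb Z^r$, $D_i=\bigcup_{\gamma\in D_i\cap\Gamma_{i-1}}(\gamma+D_{i-1})$ for $i\ge2$. Let $m\ge2$, $\Sigma=\{1,\dots,m\}$, $\alpha_i\in\Sigma$ with $\alpha_i\equiv i\pmod m$. Define $\eta\in\Sigma^{\mathbb Z^r}$ by $J(0)=\{0\}$, $\eta=\alpha_1$ on $\Gamma_1$, and for $k\ge1$, $J(k)=D_k\setminus\bigcup_{i=0}^{k-1}(J(i)+\Gamma_{i+1})$, $\eta(\gamma+h)=\alpha_{k+1}$ for $h\in J(k),\gamma\in\Gamma_{k+1}$. $X$ is the closure of the shift orbit of $\eta$ (shift $\sigma^g(x)(h)=x(h-g)$). $\mathrm{IN}_s(X)$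 is the set of $(x_1,\dots,x_s)\in X^s$ such that for every product neighborhood $U_1\times\dots\times U_s$, $(U_1,\dots,U_s)$ has arbitrarily large finite independence sets, where $J\subseteq\mathbb Z^r$ is an independence set if $\bigcap_{g\in I}\sigma^{-g}U_{t(g)}\ne\emptyset$ for all nonempty finite $I\subseteq J$ and $t:I\to\{1,\dots,s\}$. $\triangle^{(s)}(X)=\{(x_1,\dots,x_s): x_i=x_j\text{ for some } i\ne j\}$. *)

From Stdlib Require Import ZArith Reals List.
From mathcomp Require Import all_boot.

Set Implicit Arguments.
Unset Strict Implicit.
Unset Printing Implicit Defensive.

Definition pt (r : nat) := 'I_r -> Z.

Definition padd r (x y : pt r) : pt r := fun j => (x j + y j)%Z.
Definition psub r (x y : pt r) : pt r := fun j => (x j - y j)%Z.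
Definition pzero r : pt r := fun _ => 0%Z.

(* Gamma_i = < p_j^i e_j : 1 <= j <= r >  (p j i stands for p_j^i) *)
Definition inGamma r (p : 'I_r -> nat -> nat) (i : nat) (x : pt r) : Prop :=
  forall j, (Z.of_nat (p j i) | x j)%Z.

Definition inD r (q1 q2 : nat -> 'I_r -> nat) (i : nat) (x : pt r) : Prop :=
  forall j, (- Z.of_nat (q1 i j) <= x j < Z.of_nat (q2 i j))%Z.

(* Index [Gamma_i : Gamma_{i+1}] of the lattice Gamma_{i+1} in Gamma_i
   (= prod_j p_j^{i+1} / p_j^i, the divisions being exact) *)
Definition lattice_index r (p : 'I_r -> nat -> nat) (i : nat) : nat :=
  \prod_(j < r) (p j i.+1 %/ p j i).

(* The sets J(k):
     J(0) = {0},
     J(k) = D_k \ U_k  for k >= 1,  where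
     U_k  = \bigcup_{i=0}^{k-1} (J(i) + Gamma_{i+1}). *)
Definition Jgen r (q1 q2 : nat -> 'I_r -> nat) (k : nat) (U : pt r -> Prop)
  (h : pt r) : Prop :=
  match k with
  | 0 => h = @pzero r
  | _ => inD q1 q2 k h /\ ~ U h
  end.

Fixpoint Ucov r (p : 'I_r -> nat -> nat) (q1 q2 : nat -> 'I_r -> nat) (k : nat)
  (x : pt r) : Prop :=
  match k with
  | 0 => False
  | S k' => Ucov p q1 q2 k' x \/
            exists h g, Jgen q1 q2 k' (Ucov p q1 q2 k') h /\
                        inGamma p (k'.+1) g /\ x = padd h g
  end.

Definition Jset r (p : 'I_r -> nat -> nat) (q1 q2 : nat -> 'I_r -> nat) (k : nat)
  (h : pt r) : Prop := Jgen q1 q2 k (Ucov p q1 q2 k) h.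

(* Configurations: elements of Sigma^{Z^r}, Sigma = {1,...,m} viewed inside nat *)
Definition config (r : nat) := pt r -> nat.

Definition shift r (g : pt r) (x : config r) : config r := fun h => x (psub h g).

(* X = closure of the shift orbit of eta in the product topology (discrete
   alphabet): every cylinder neighbourhood of x meets the orbit of eta. *)
Definition inX r (eta : config r) (x : config r) : Prop :=
  forall F : list (pt r), exists g : pt r,
    forall h, In h F -> x h = shift g eta h.

(* U is a neighbourhood of x in X: it contains all points of X lying in some
   cylinder neighbourhood {y | y = x on F} (F finite) of x. *)
Definition nbhdX r (eta : config r) (x : config r) (U : config r -> Prop) : Prop :=
  exists F : list (pt r), forall y, inX eta y ->
    (forall h, In h F -> y h = x h) -> U y.

Definition indep_set r (eta : config r) (s : nat) (U : 'I_s -> config r -> Prop)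
  (Jl : list (pt r)) : Prop :=
  forall (I : list (pt r)) (t : pt r -> 'I_s),
    I <> nil -> (forall g, In g I -> In g Jl) ->
    exists x, inX eta x /\ forall g, In g I -> U (t g) (shift g x).

Definition IN r (eta : config r) (s : nat) (xs : 'I_s -> config r) : Prop :=
  (forall i, inX eta (xs i)) /\
  forall U : 'I_s -> config r -> Prop,
    (forall i, nbhdX eta (xs i) (U i)) ->
    forall n : nat, exists Jl : list (pt r),
      NoDup Jl /\ n <= length Jl /\ indep_set eta U Jl.

Definition fat_diag r (s : nat) (xs : 'I_s -> config r) : Prop :=
  exists i j : 'I_s, i <> j /\ xs i = xs j.

(* An off-diagonal tuple in IN_s(X) is separated on a finite window F inside
   a box of radius K.  Independence sets are arbitrarily large, so by
   pigeonhole on residues mod Gamma_K the s cylinders are realised at s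
   positions of one Gamma_K-coset: restricted to F, the tuple consists of
   translates of eta along w + Gamma_K.  Now eta is Gamma_K-periodic on every
   J(i) + Gamma_(i+1) with i < K, and all points of J(K) (the holes of level K)
   look alike under Gamma_K-translation, because D_k is tiled by
   Gamma_K-translates of D_K for k >= K.  A point of the box around w reduces
   to its representative in D_K up to one of 2^r corner vectors, so each
   pattern is determined by the values of eta at 2^r points, and s <= m^(2^r). *)

From Pilot Require Import Defs.
From Stdlib Require Import ZArith Reals List Lia.
From Stdlib Require Import FunctionalExtensionality Classical ClassicalEpsilon.
From mathcomp Require Import all_boot zify.

Set Implicit Arguments.
Unset Strict Implicit.
Unset Printing Implicit Defensive.

Tactic Notation "pt_lia" :=
  apply: functional_extensionality => ?; rewrite /padd /psub /pzero; lia.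
Tactic Notation "pt_lia" "using" constr(e) :=
  apply: functional_extensionality => j;
  have := congr1 (fun f => f j) e; rewrite /padd /psub /pzero; lia.

Section Lattice.
Variables (r : nat) (p : 'I_r -> nat -> nat).

Lemma gamma0 i : inGamma p i (@pzero r).
Proof. by move=> j; exists 0%Z. Qed.

Lemma gammaD i x y : inGamma p i x -> inGamma p i y -> inGamma p i (padd x y).
Proof. by move=> hx hy j; apply: Z.divide_add_r. Qed.

Lemma gammaB i x y : inGamma p i x -> inGamma p i y -> inGamma p i (psub x y).
Proof. by move=> hx hy j; apply: Z.divide_sub_r. Qed.

Hypothesis hp_dvd : forall j i, 1 <= i -> p j i %| p j i.+1.

Lemma gamma_mono i k x : 1 <= i -> i <= k -> inGamma p k x -> inGamma p i x.
Proof.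
move=> hi; elim: k => [|k IH]; first by rewrite leqn0 => /eqP ->.
rewrite leq_eqVlt => /orP [/eqP -> //|hik] hx; apply: IH => // j.
have /dvdnP [c hc] := hp_dvd j (leq_trans hi hik).
by apply: Z.divide_trans (hx j); exists (Z.of_nat c); rewrite hc Nat2Z.inj_mul.
Qed.

End Lattice.

Definition in_box r K (h : pt r) := forall j, (- Z.of_nat K < h j < Z.of_nat K)%Z.

Lemma box_offset (K lo hi a rho y : Z) : (K < lo)%Z -> (K < hi)%Z ->
  (- K < a < K)%Z -> (- lo <= rho < hi)%Z -> (- lo <= y < hi)%Z ->
  (lo + hi | a + rho - y)%Z ->
  (a + rho - y = 0 \/ a + rho - y = if 0 <=? rho then lo + hi else - (lo + hi))%Z.
Proof.
move=> ? ? ? ? ? [c hc]; rewrite hc.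
have : (c <= -2 \/ c = -1 \/ c = 0 \/ c = 1 \/ 2 <= c)%Z by lia.
by case: Z.leb_spec => ? [?|[?|[?|[?|?]]]]; subst; nia.
Qed.

Section Construction.
Variables (r : nat) (p : 'I_r -> nat -> nat) (q1 q2 : nat -> 'I_r -> nat).
Hypothesis hp_dvd : forall j i, 1 <= i -> p j i %| p j i.+1.
Hypothesis hDfund : forall i, 1 <= i -> forall x : pt r,
  exists y, inD q1 q2 i y /\ inGamma p i (psub x y) /\
    forall y', inD q1 q2 i y' -> inGamma p i (psub x y') -> y' = y.
Hypothesis hDrec : forall i, 2 <= i -> forall x : pt r,
  inD q1 q2 i x <->
  exists g y, inD q1 q2 i g /\ inGamma p i.-1 g /\ inD q1 q2 i.-1 y /\
              x = padd g y.
Hypothesis hDcover : forall x : pt r, exists i, 1 <= i /\ inD q1 q2 i x.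

Local Notation Gamma := (inGamma p).
Local Notation D := (inD q1 q2).
Local Notation J := (Jset p q1 q2).
Local Notation U := (Ucov p q1 q2).

Definition inJG k (x : pt r) := exists h g, J k h /\ Gamma k.+1 g /\ x = padd h g.

Lemma Jset_iff k y : 1 <= k -> J k y <-> D k y /\ ~ U k y.
Proof. by case: k. Qed.

Lemma Ucov_inJG k x : U k x <-> exists i, i < k /\ inJG i x.
Proof.
elim: k x => [|k IH] x /=; first by split => // -[i [hi _]].
split => [[/IH [i [hik hA]]|hA]|[i [hik hA]]].
- by exists i; split => //; apply: ltnW.
- by exists k.
- move: hik hA; rewrite ltnS leq_eqVlt => /orP [/eqP -> hA|hik hA]; first by right.
  by left; apply/IH; exists i.
Qed.

Lemma inJG_translate k x w : inJG k x -> Gamma k.+1 w -> inJG k (padd x w).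
Proof.
move=> [h [g [hJ [hg ->]]]] hw; exists h, (padd g w).
by split; [|split; [apply: gammaD|pt_lia]].
Qed.

Lemma Ucov_translate k w x : Gamma k w -> U k (padd x w) <-> U k x.
Proof.
have step y v : Gamma k v -> U k y -> U k (padd y v).
  move=> hv /Ucov_inJG [i [hik hA]]; apply/Ucov_inJG; exists i; split => //.
  by apply: inJG_translate hA _; apply: gamma_mono hv.
move=> hw; split => [hU|]; last exact: step.
have -> : x = padd (padd x w) (psub (@pzero r) w) by pt_lia.
by apply: step hU; apply: gammaB => //; apply: gamma0.
Qed.

Lemma inD_eq i y y' : 1 <= i -> D i y -> D i y' -> Gamma i (psub y y') -> y = y'.
Proof.
move=> hi hy hy' hyy'; have [c [_ [_ huniq]]] := hDfund hi y.
have hyy : Gamma i (psub y y).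
  by rewrite (_ : psub y y = @pzero r); [apply: gamma0|pt_lia].
by rewrite (huniq y hy hyy) (huniq y' hy' hyy').
Qed.

(* [D_k] is a union of [Gamma_K]-translates of [D_K]. *)
Lemma inD_tiled K k y1 y2 : 1 <= K -> K <= k -> D K y1 -> D K y2 ->
  forall g, Gamma K g -> D k (padd y1 g) -> D k (padd y2 g).
Proof.
move=> hK; elim: k => [|k IH] hKk h1 h2 g hg hx; first lia.
case: (ltnP k K) => hkK.
  have ek : k.+1 = K by lia.
  rewrite ek in hx *.
  have e : padd y1 g = y1.
    by apply: (inD_eq hK hx h1); rewrite (_ : psub _ _ = g) //; pt_lia.
  by rewrite (_ : padd y2 g = y2) //; pt_lia using e.
have hk2 : 2 <= k.+1 by lia.
have [g' [y [hg'D [hg' [hy e]]]]] := proj1 (hDrec hk2 _) hx.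
have hgK : Gamma K (psub g g') by apply: gammaB => //; apply: gamma_mono hg'.
have hy1 : D k (padd y1 (psub g g')) by rewrite (_ : padd _ _ = y) //; pt_lia using e.
apply/(hDrec hk2); exists g', (padd y2 (psub g g')).
by do 2!split => //; split; [exact: IH hy1 | pt_lia].
Qed.

(* Below level [K] neither hole is covered; from level [K] on, [inD_tiled]
   moves the witness of one hole onto the other. *)
Lemma inJG_hole_transfer K k y1 y2 w : 1 <= K -> J K y1 -> J K y2 -> Gamma K w ->
  (U k (padd y1 w) <-> U k (padd y2 w)) -> inJG k (padd y1 w) -> inJG k (padd y2 w).
Proof.
move=> hK /(Jset_iff _ hK) [hD1 hU1] /(Jset_iff _ hK) [hD2 _] hw hUk hA.
case: (ltnP k K) => hkK.
  by case: hU1; apply/(Ucov_translate _ hw)/Ucov_inJG; exists k.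
have hk : 1 <= k by lia.
move: hA => [h [g [/(Jset_iff _ hk) [hDh hUh] [hg e]]]].
have hgk : Gamma k g by apply: gamma_mono hg.
have hv : Gamma K (psub w g) by apply: gammaB => //; apply: gamma_mono hgk.
exists (padd y2 (psub w g)), g; split; last by split => //; pt_lia.
apply/(Jset_iff _ hk); split.
  apply: (inD_tiled hK hkK hD1 hD2 hv).
  by rewrite (_ : padd _ _ = h) //; pt_lia using e.
move=> /(Ucov_translate _ hgk) hU; apply: hUh; apply/(Ucov_translate _ hgk).
rewrite (_ : padd h g = padd y1 w); last by pt_lia using e.
by apply/hUk; rewrite (_ : padd y2 w = padd (padd y2 (psub w g)) g) //; pt_lia.
Qed.

Lemma Ucov_hole_iff K y1 y2 w k : 1 <= K -> J K y1 -> J K y2 -> Gamma K w ->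
  U k (padd y1 w) <-> U k (padd y2 w).
Proof.
move=> hK h1 h2 hw; elim: k => [|k IH] //=.
split => -[hU|hA]; [left; exact/IH | right | left; exact/IH | right].
- exact: (inJG_hole_transfer hK h1 h2 hw IH).
- exact: (inJG_hole_transfer hK h2 h1 hw (iff_sym IH)).
Qed.

Variables (m : nat) (alpha : nat -> nat) (eta : config r).
Hypothesis heta : forall k (h g : pt r), J k h -> Gamma k.+1 g ->
  eta (padd g h) = alpha k.+1.

Lemma eta_inJG k x : inJG k x -> eta x = alpha k.+1.
Proof. by move=> [h [g [hJ [hg ->]]]]; rewrite -(heta hJ hg); congr eta; pt_lia. Qed.

Lemma inJG_cover x : exists k, inJG k x.
Proof.
have [i [hi hx]] := hDcover x.
case: (classic (U i x)) => [/Ucov_inJG [k [_ hk]]|hU]; first by exists k.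
exists i, x, (@pzero r); split; first exact/Jset_iff.
by split; [apply: gamma0 | pt_lia].
Qed.

Lemma eta_Ucov_periodic K y w : U K y -> Gamma K w -> eta (padd y w) = eta y.
Proof.
move=> /Ucov_inJG [i [hi hA]] hw.
by rewrite (eta_inJG hA) (eta_inJG (inJG_translate hA (gamma_mono hp_dvd _ hi hw))).
Qed.

Lemma eta_hole_translate K y1 y2 w : 1 <= K -> J K y1 -> J K y2 -> Gamma K w ->
  eta (padd y1 w) = eta (padd y2 w).
Proof.
move=> hK h1 h2 hw; have [k hA] := inJG_cover (padd y1 w).
have hA2 := inJG_hole_transfer hK h1 h2 hw (Ucov_hole_iff _ hK h1 h2 hw) hA.
by rewrite (eta_inJG hA) (eta_inJG hA2).
Qed.

Hypothesis halpha : forall i, 1 <= i -> 1 <= alpha i <= m.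

Lemma eta_range x : 1 <= eta x <= m.
Proof. by have [k hA] := inJG_cover x; rewrite (eta_inJG hA); apply: halpha. Qed.

Hypothesis hq1 : forall i j, 1 <= i -> i < q1 i j.
Hypothesis hq2 : forall i j, 1 <= i -> i < q2 i j.
Hypothesis hqsum : forall i j, 1 <= i -> q1 i j + q2 i j = p j i.

Definition corner K (rho : pt r) (b : {ffun 'I_r -> bool}) : pt r := fun j =>
  if b j then (if 0 <=? rho j then Z.of_nat (p j K) else - Z.of_nat (p j K))%Z
  else 0%Z.

Lemma corner_offset K h rho y : 1 <= K -> in_box K h -> D K rho -> D K y ->
  Gamma K (psub (padd h rho) y) -> exists b, psub (padd h rho) y = corner K rho b.
Proof.
move=> hK hh hrho hy he.
exists [ffun j => ~~ (psub (padd h rho) y j =? 0)%Z].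
apply: functional_extensionality => j; rewrite /corner ffunE.
have hP : Z.of_nat (p j K) = (Z.of_nat (q1 K j) + Z.of_nat (q2 K j))%Z.
  by rewrite -hqsum // Nat2Z.inj_add.
have hlo : (Z.of_nat K < Z.of_nat (q1 K j))%Z by have := hq1 j hK; lia.
have hhi : (Z.of_nat K < Z.of_nat (q2 K j))%Z by have := hq2 j hK; lia.
move: (he j); rewrite hP /psub /padd => hdiv.
have := box_offset hlo hhi (hh j) (hrho j) (hy j) hdiv.
by case: Z.eqb_spec => /= ?; lia.
Qed.

Definition some_hole K : pt r := epsilon (inhabits (@pzero r)) (J K).

Lemma some_holeP K y : J K y -> J K (some_hole K).
Proof. by move=> hy; apply: epsilon_spec; exists y. Qed.

(* [h + rho] is a corner vector away from its representative [y] in [D_K]: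
   if [y] is covered at level [K], [eta] is [Gamma_K]-periodic there, and
   otherwise [y] may be replaced by the hole [some_hole K]. *)
Lemma eta_box_translate K h rho w w' : 1 <= K -> in_box K h -> D K rho ->
  Gamma K w -> Gamma K w' ->
  (forall b, eta (padd (some_hole K) (padd (corner K rho b) w)) =
             eta (padd (some_hole K) (padd (corner K rho b) w'))) ->
  eta (padd (padd h rho) w) = eta (padd (padd h rho) w').
Proof.
move=> hK hh hrho hw hw' hpat.
have [y [hy [he _]]] := hDfund hK (padd h rho).
have [b hb] := corner_offset hK hh hrho hy he.
have hsplit v : padd (padd h rho) v = padd y (padd (corner K rho b) v).
  by rewrite -hb; pt_lia.
have hcorner v : Gamma K v -> Gamma K (padd (corner K rho b) v).
  by move=> hv; apply: gammaD => //; rewrite -hb.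
rewrite !hsplit; case: (classic (U K y)) => hU.
  by rewrite (eta_Ucov_periodic hU (hcorner _ hw)) (eta_Ucov_periodic hU (hcorner _ hw')).
have hJ : J K y by apply/Jset_iff.
have hJ0 := some_holeP hJ.
rewrite (eta_hole_translate hK hJ hJ0 (hcorner _ hw)).
by rewrite (eta_hole_translate hK hJ hJ0 (hcorner _ hw')).
Qed.

Hypothesis hm : 0 < m.

Definition colour (x : pt r) : 'I_m.-1.+1 := inord (eta x).-1.

Lemma colour_inj x y : colour x = colour y -> eta x = eta y.
Proof.
have := eta_range x; have := eta_range y => hy hx /(congr1 val).
by rewrite /= !inordK; lia.
Qed.

Lemma coset_pattern_bound K F s (z : 'I_s -> pt r) z0 : 1 <= K ->
  (forall h, In h F -> in_box K h) -> (forall i, Gamma K (psub (z i) z0)) ->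
  (forall i i', i <> i' -> exists h, In h F /\ eta (padd h (z i)) <> eta (padd h (z i'))) ->
  s <= m ^ (2 ^ r).
Proof.
move=> hK hF hz hdist.
have [rho [hrho [hz0 _]]] := hDfund hK z0.
have hw i : Gamma K (psub (z i) rho).
  by rewrite (_ : psub _ _ = padd (psub (z i) z0) (psub z0 rho)); [apply: gammaD|pt_lia].
pose code i := [ffun b => colour (padd (some_hole K) (padd (corner K rho b) (psub (z i) rho)))].
suff /leq_card : injective code.
  by rewrite card_ord card_ffun card_ffun !card_ord card_bool prednK.
move=> i i' hcode; apply/eqP; apply: contraT => /eqP hii'.
have [h [hh []]] := hdist i i' hii'.
have hz_split v : padd h (z v) = padd (padd h rho) (psub (z v) rho) by pt_lia.
rewrite !hz_split; apply: (eta_box_translate hK (hF _ hh) hrho (hw i) (hw i')) => b.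
apply: colour_inj.
by move/ffunP: hcode => /(_ b); rewrite !ffunE.
Qed.

End Construction.

Lemma In_mem (T : eqType) (x : T) (s : seq T) : x \in s -> In x s.
Proof.
by elim: s => //= y s IH; rewrite in_cons => /orP [/eqP ->|/IH]; [left|right].
Qed.

Lemma finite_separating_set (I : finType) (A B : Type) (f : I -> A -> B) :
  exists F : list A, forall i i', f i <> f i' -> exists a, In a F /\ f i a <> f i' a.
Proof.
suff [F hF] : exists F : list A, forall ii, ii \in enum {: I * I} ->
    f ii.1 <> f ii.2 -> exists a, In a F /\ f ii.1 a <> f ii.2 a.
  by exists F => i i'; apply: (hF (i, i')); rewrite mem_enum.
elim: (enum _) => [|[i i'] L [F hF]]; first by exists nil.
case: (classic (f i = f i')) => [e|hne].
  by exists F => -[k k']; rewrite in_cons => /orP [/eqP [-> ->] /(_ e)|/hF].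
have [a ha] : exists a, f i a <> f i' a.
  by apply: not_all_ex_not => hall; apply: hne; apply: functional_extensionality.
exists (a :: F) => -[k k']; rewrite in_cons => /orP [/eqP [-> ->] _|/hF h /h].
  by exists a; split => //; left.
by move=> [a' [? ?]]; exists a'; split => //; right.
Qed.

Lemma box_bound r (F : list (pt r)) : exists K, 1 <= K /\ forall h, In h F -> in_box K h.
Proof.
elim: F => [|h F [K [hK hF]]]; first by exists 1.
pose Kh := \max_j Z.abs_nat (h j).
exists (maxn K Kh.+1); split => [|h' /= [<-|/hF hh'] j]; first lia.
- by have : Z.abs_nat (h j) <= Kh := leq_bigmax (F := fun j => Z.abs_nat (h j)) j; lia.
- by have := hh' j; lia.
Qed.

Lemma pigeonhole_count (T : Type) (C : finType) (kap : T -> C) (L : seq T) n :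
  n * #|C| < size L -> exists c, n < count (fun x => kap x == c) L.
Proof.
have -> : size L = \sum_(c : C) count (fun x => kap x == c) L.
  elim: L => [|a L IH] /=; first by rewrite big1.
  rewrite big_split /= -IH (bigD1 (kap a)) //= eqxx big1 ?addn0 // => c.
  by rewrite eq_sym => /negbTE ->.
move=> hL; apply: NNPP => hn; move: hL; apply/negP; rewrite -leqNgt mulnC -sum_nat_const.
by apply: leq_sum => c _; rewrite leqNgt; apply/negP => hc; apply: hn; exists c.
Qed.

Lemma NoDup_injective_family (T : Type) (S : list T) n : NoDup S -> n <= length S ->
  exists f : 'I_n -> T, injective f /\ forall i, In (f i) S.
Proof.
case: S => [|d S] hN hn.
  have {hn} -> : n = 0 by case: n hn.
  have ord0_empty : 'I_0 -> False by case.
  by exists (fun i => False_rect T (ord0_empty i)); split => i; case: (ord0_empty i).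
have hlt (i : 'I_n) : (i < length (d :: S))%coq_nat by apply/ltP; apply: leq_trans hn.
exists (fun i => List.nth i (d :: S) d); split => [i i' e|i]; last exact: nth_In.
by apply: val_inj; apply: (proj1 (NoDup_nth _ d) hN _ _ (hlt i) (hlt i') e).
Qed.

Lemma large_fiber_family (T : Type) (C : finType) (kap : T -> C) (L : list T) n :
  NoDup L -> n.-1 * #|C| < length L ->
  exists c (f : 'I_n -> T), injective f /\ forall i, In (f i) L /\ kap (f i) = c.
Proof.
move=> hN hL; have [c hc] := pigeonhole_count kap hL.
have hS : n <= length (List.filter (fun x => kap x == c) L).
  by rewrite -[length _]/(size (filter _ _)) size_filter; lia.
have [f [finj hf]] := NoDup_injective_family (NoDup_filter _ hN) hS.
exists c, f; split => // i.
by have /filter_In [? /eqP ?] := hf i.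
Qed.

Lemma injective_left_inverse (I T : Type) (f : I -> T) :
  inhabited I -> injective f -> exists t : T -> I, cancel f t.
Proof.
move=> hI finj; exists (fun x => epsilon hI (fun i => f i = x)) => i.
by apply: finj; apply: (epsilon_spec hI (fun i' => f i' = f i)); exists i.
Qed.

Definition residue r (p : 'I_r -> nat -> nat) K (g : pt r) :
  {ffun 'I_r -> 'I_(\max_j p j K).+1} :=
  [ffun j => inord (Z.to_nat (g j mod Z.of_nat (p j K)))].

Lemma residue_eq r (p : 'I_r -> nat -> nat) K g g' : (forall j, 0 < p j K) ->
  residue p K g = residue p K g' -> inGamma p K (psub g g').
Proof.
move=> hp /ffunP e j; have hP : (0 < Z.of_nat (p j K))%Z by have := hp j; lia.
have hlt x : Z.to_nat (x mod Z.of_nat (p j K)) < (\max_j p j K).+1.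
  have : p j K <= \max_j p j K := leq_bigmax (F := fun j => p j K) j.
  by have := Z.mod_pos_bound x _ hP; lia.
move: (e j) => /(congr1 val); rewrite !ffunE /= !inordK; try exact: hlt.
have := Z.mod_pos_bound (g j) _ hP; have := Z.mod_pos_bound (g' j) _ hP => b2 b1 hmod.
by apply/Z.mod_divide; [lia | apply/Z.cong_iff_0; lia].
Qed.

(* The independence set is thinned, by pigeonhole on residues mod [Gamma_K],
   to [s] points [g i] of one coset; a point of [X] realising the cylinders
   [xs i] at the [g i] is then approximated by a translate [v] of [eta]. *)
Lemma IN_coset_realisation r (p : 'I_r -> nat -> nat) K (eta : config r) s
  (xs : 'I_s -> config r) (F : list (pt r)) :
  (forall j, 0 < p j K) -> 0 < s -> IN eta xs ->
  exists z : 'I_s -> pt r, (forall i i', inGamma p K (psub (z i) (z i'))) /\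
    forall i h, In h F -> xs i h = eta (padd h (z i)).
Proof.
move=> hp hs [_ hIN].
pose cyl i (y : config r) := forall h, In h F -> y h = xs i h.
have [Jl [hJl [hlen hind]]] := hIN cyl (fun i => ex_intro _ F (fun y _ hy => hy))
  (s.-1 * #|{ffun 'I_r -> 'I_(\max_j p j K).+1}|).+1.
have [c [g [ginj hg]]] := large_fiber_family (residue p K) hJl hlen.
have [t ht] := injective_left_inverse (inhabits (Ordinal hs)) ginj.
have hs_enum i : In i (enum 'I_s) by apply: In_mem; rewrite mem_enum.
pose I := List.map g (enum 'I_s).
have hgI i : In (g i) I by exact: in_map (hs_enum i).
have hIne : I <> nil by move=> e; move: (hgI (Ordinal hs)); rewrite e.
have hIJl g' : In g' I -> In g' Jl by move=> /in_map_iff [i [<- _]]; apply: (hg i).1.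
have [x [hxX hx]] := hind I t hIne hIJl.
have [v hv] := hxX (List.flat_map (fun i => List.map (fun h => psub h (g i)) F) (enum 'I_s)).
exists (fun i => psub (psub (@pzero r) (g i)) v); split => [i i'|i h hh].
  rewrite (_ : psub _ _ = psub (g i') (g i)); last by pt_lia.
  by apply: residue_eq => //; rewrite (hg i).2 (hg i').2.
rewrite -{1}(ht i) -(hx _ (hgI i) _ hh) /Defs.shift hv /Defs.shift; first by congr eta; pt_lia.
by apply/in_flat_map; exists i; split; [exact: hs_enum | exact: in_map].
Qed.

Unset Implicit Arguments.

Theorem corollary4p9
  (r : nat) (hr : 2 <= r)
  (p : 'I_r -> nat -> nat)                 (* p j i = p_j^i, i >= 1 *)
  (hp_pos : forall j i, 1 <= i -> 0 < p j i)
  (hp_inc : forall j i, 1 <= i -> p j i < p j i.+1)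
  (hp_dvd : forall j i, 1 <= i -> p j i %| p j i.+1)
  (hp_big : forall j i, 1 <= i -> (2 * i).+1 < p j i)
  (hindex : forall i, 1 <= i ->
     Rgt (INR (lattice_index p i))
         (Rdiv (INR 1) (Rminus (INR 1) (Rpower (INR 2) (Ropp (pow (Rinv (INR 2)) i.+1))))))
  (q1 q2 : nat -> 'I_r -> nat)           (* q1 i j = q^i_{1,j}, q2 i j = q^i_{2,j} *)
  (hq1 : forall i j, 1 <= i -> i < q1 i j)
  (hq2 : forall i j, 1 <= i -> i < q2 i j)
  (hqsum : forall i j, 1 <= i -> q1 i j + q2 i j = p j i)
  (hDfund : forall i, 1 <= i -> forall x : pt r,
     exists y, inD q1 q2 i y /\ inGamma p i (psub x y) /\
       forall y', inD q1 q2 i y' -> inGamma p i (psub x y') -> y' = y)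
  (hD0 : forall i, 1 <= i -> inD q1 q2 i (@pzero r))
  (hDmono : forall i, 1 <= i -> forall x, inD q1 q2 i x -> inD q1 q2 i.+1 x)
  (hDcover : forall x : pt r, exists i, 1 <= i /\ inD q1 q2 i x)
  (hDrec : forall i, 2 <= i -> forall x : pt r,
     inD q1 q2 i x <->
     exists g y, inD q1 q2 i g /\ inGamma p i.-1 g /\ inD q1 q2 i.-1 y /\
                 x = padd g y)
  (m : nat) (hm : 2 <= m)
  (alpha : nat -> nat)                    (* alpha i = alpha_i, i >= 1 *)
  (halpha : forall i, 1 <= i -> 1 <= alpha i <= m /\ alpha i = i %[mod m])
  (eta : config r)
  (heta : forall k (h g : pt r), Jset p q1 q2 k h -> inGamma p k.+1 g ->
            eta (padd g h) = alpha k.+1)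
  (s : nat) (hs : m ^ (2 ^ r) < s) :
  forall xs : 'I_s -> config r, IN eta xs -> fat_diag xs.
Proof.
move=> xs hIN; apply: NNPP => hdiag.
have [F hF] := finite_separating_set xs.
have [K [hK hFK]] := box_bound F.
have hs0 : 0 < s by lia.
have [z [hz hxz]] := IN_coset_realisation F (fun j => hp_pos j K hK) hs0 hIN.
have hdist i i' : i <> i' -> exists h, In h F /\ eta (padd h (z i)) <> eta (padd h (z i')).
  move=> hii'; have [|h [hh hne]] := hF i i'; first by move=> e; apply: hdiag; exists i, i'.
  by exists h; rewrite -!hxz.
have := coset_pattern_bound hp_dvd hDfund hDrec hDcover heta
  (fun i hi => (halpha i hi).1) hq1 hq2 hqsum (ltnW hm) hK hFK (hz^~ (Ordinal hs0)) hdist.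
by rewrite leqNgt hs.
Qed.
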